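(* Let $G$ be a group with a finite generating set $S$ not containing the identity, and let $d_W$ and $d_C$ be the word metric and the cardinal metric on $G$ with respect to $S$. If $(G,d_W)$ has infinite diameter, then $(G,d_W)$ and $(G,d_C)$ are not quasi-isometric.
   Context: The word metric: $d_W(g,g)=0$ and for $g\ne h$, $d_W(g,h)$ is the least $n\in\mathbb{N}$ such that $g^{-1}h=s_1^{\epsilon_1}\cdots s_n^{\epsilon_n}$ with $s_i\in S$, $\epsilon_i\in\{\pm1\}$. The cardinal norm is $\|g\| = \min\{|A| : A\subseteq S,\ g\in\langle A\rangle\}$, where $\langle A\rangle$ is the subgroup generated by $A$, and $d_C(g,h)=\|g^{-1}h\|$. *)

From Stdlib Require Import Reals List Lra ClassicalEpsilon.
Import ListNotations.
Open Scope R_scope.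

Set Implicit Arguments.

Record is_group (T : Type) (mul : T -> T -> T) (inv : T -> T) (e : T) : Prop := {
  grp_assoc : forall x y z, mul x (mul y z) = mul (mul x y) z;
  grp_id_l : forall x, mul e x = x;
  grp_id_r : forall x, mul x e = x;
  grp_inv_l : forall x, mul (inv x) x = e;
  grp_inv_r : forall x, mul x (inv x) = e }.

Section Group.
Variables (T : Type) (mul : T -> T -> T) (inv : T -> T) (e : T).

Definition is_subgroup (H : T -> Prop) : Prop :=
  H e /\ (forall x y, H x -> H y -> H (mul x y)) /\ (forall x, H x -> H (inv x)).

Definition in_gen (A : list T) (x : T) : Prop :=
  forall H : T -> Prop, is_subgroup H -> (forall a, In a A -> H a) -> H x.

(* evaluation of a word s_1^eps_1 ... s_n^eps_n ; true = +1, false = -1 *)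
Definition letter (p : T * bool) : T := if snd p then fst p else inv (fst p).
Definition eval_word (w : list (T * bool)) : T := fold_right (fun p acc => mul (letter p) acc) e w.

Definition word_rep (S : list T) (x : T) (n : nat) : Prop :=
  exists w : list (T * bool), length w = n /\ (forall p, In p w -> In (fst p) S) /\ eval_word w = x.

Definition card_rep (S : list T) (x : T) (n : nat) : Prop :=
  exists A : list T, NoDup A /\ length A = n /\ incl A S /\ in_gen A x.

End Group.

(* the least natural number satisfying P (meaningful when one exists) *)
Definition is_least (P : nat -> Prop) (n : nat) : Prop := P n /\ forall m, P m -> (n <= m)%nat.
Definition least_nat (P : nat -> Prop) : nat := epsilon (inhabits 0%nat) (is_least P).

Definition word_dist (T : Type) (mul : T -> T -> T) (inv : T -> T) (e : T) (S : list T) (g h : T) : nat :=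
  least_nat (word_rep mul inv e S (mul (inv g) h)).

Definition card_norm (T : Type) (mul : T -> T -> T) (inv : T -> T) (e : T) (S : list T) (x : T) : nat :=
  least_nat (card_rep mul inv e S x).
Definition card_dist (T : Type) (mul : T -> T -> T) (inv : T -> T) (e : T) (S : list T) (g h : T) : nat :=
  card_norm mul inv e S (mul (inv g) h).

Definition infinite_diameter (X : Type) (d : X -> X -> nat) : Prop :=
  forall N : nat, exists x y, (N <= d x y)%nat.

Definition quasi_isometric (X Y : Type) (dX : X -> X -> nat) (dY : Y -> Y -> nat) : Prop :=
  exists (f : X -> Y) (K C : R), 1 <= K /\ 0 <= C /\
    (forall x1 x2, INR (dX x1 x2) / K - C <= INR (dY (f x1) (f x2)) /\
                   INR (dY (f x1) (f x2)) <= K * INR (dX x1 x2) + C) /\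
    (forall y, exists x, INR (dY y (f x)) <= C).

(* Since S generates G, every element lies in the subgroup generated by the
   distinct elements of S, so the cardinal metric takes values at most |S|.
   A quasi-isometry bounds word distances by a multiple of cardinal distances
   plus a constant, so the word metric would be bounded too. *)

From Stdlib Require Import Reals List Lra Classical ClassicalEpsilon.
Open Scope R_scope.

Lemma is_least_exists (P : nat -> Prop) (m : nat) : P m -> exists n, is_least P n.
Proof.
  induction m as [m IH] using (well_founded_induction Wf_nat.lt_wf).
  intro Pm.
  destruct (classic (exists k, (k < m)%nat /\ P k)) as [[k [Hk Pk]] | Hnone].
  - exact (IH k Hk Pk).
  - exists m. split; [exact Pm |].
    intros k Pk. destruct (Nat.lt_ge_cases k m) as [Hk | Hk]; [| exact Hk].
    exfalso. apply Hnone. eauto.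
Qed.

Lemma least_nat_le (P : nat -> Prop) (m : nat) : P m -> (least_nat P <= m)%nat.
Proof.
  intro Pm.
  apply (epsilon_spec (inhabits 0%nat) (is_least P) (is_least_exists P m Pm)).
  exact Pm.
Qed.

Lemma card_norm_le_nodup (T : Type) (mul : T -> T -> T) (inv : T -> T) (e : T)
  (S : list T) (HS_gen : forall g : T, in_gen mul inv e S g) (x : T) :
  (card_norm mul inv e S x
   <= length (nodup (fun a b => excluded_middle_informative (a = b)) S))%nat.
Proof.
  set (A := nodup (fun a b => excluded_middle_informative (a = b)) S).
  apply least_nat_le. exists A. split; [apply NoDup_nodup |].
  split; [reflexivity |]. split.
  - intros a Ha. exact (proj1 (nodup_In _ S a) Ha).
  - intros H HH HA. apply (HS_gen x H HH).
    intros a Ha. apply HA, nodup_In, Ha.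
Qed.

Lemma not_quasi_isometric_bounded (X Y : Type) (dX : X -> X -> nat)
  (dY : Y -> Y -> nat) (B : nat) :
  infinite_diameter dX -> (forall y1 y2, (dY y1 y2 <= B)%nat) ->
  ~ quasi_isometric dX dY.
Proof.
  intros Hinf HB [f [K [C [HK [HC [Hq _]]]]]].
  destruct (INR_archimed 1 (K * (INR B + C))) as [N HN]; [lra |].
  destruct (Hinf N) as [x1 [x2 Hfar]].
  apply le_INR in Hfar.
  pose proof (le_INR _ _ (HB (f x1) (f x2))) as Hbounded.
  pose proof (proj1 (Hq x1 x2)) as Hlower.
  set (d := INR (dX x1 x2)) in *.
  assert (Hdiv : d / K <= INR B + C) by lra.
  apply Rmult_le_compat_l with (r := K) in Hdiv; [| lra].
  replace (K * (d / K)) with d in Hdiv by (field; lra).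
  lra.
Qed.

Theorem mainTheorem6 (T : Type) (mul : T -> T -> T) (inv : T -> T) (e : T)
  (HG : is_group mul inv e) (S : list T)
  (HS_gen : forall g : T, in_gen mul inv e S g)
  (HS_e : ~ In e S) :
  infinite_diameter (word_dist mul inv e S) ->
  ~ quasi_isometric (word_dist mul inv e S) (card_dist mul inv e S).
Proof.
  intro Hinf.
  eapply not_quasi_isometric_bounded; [exact Hinf |].
  intros g h. apply card_norm_le_nodup, HS_gen.
Qed.
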